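(* Let $G$ be a 1-player timed region graph in which every region of $\mathcal R_{\mathrm{Min}}$ is choiceless. Let $\chi\in\Delta_{\mathrm{Max}}$ be regionally constant (so $G\upharpoonright\chi$ is 0-player) and let $(T^\chi,D^\chi)\models\mathrm{Opt}(G\upharpoonright\chi)$. If $\mathrm{Improve}_{\mathrm{Max}}(\chi,(T^\chi,D^\chi))=\chi$, then $(T^\chi,D^\chi)\models\mathrm{Opt}_{\mathrm{Max}}(G)$.
   Context: Fix $k\in\mathbb N$. Let $C$ be a finite set of clocks. A clock valuation is a function $\nu:C\to[0,k]$; $V$ is the set of clock valuations. For $t\ge 0$ let $(\nu+t)(c)=\nu(c)+t$; for $C'\subseteq C$ let $\mathrm{Reset}(\nu,C')(c)=0$ if $c\in C'$ and $=\nu(c)$ otherwise. Simple clock constraints are $c\bowtie i$ or $c-c'\bowtie i$ with $c,c'\in C$, $i\in\{0,\dots,k\}$, ${\bowtie}\in\{<,>,=,\le,\ge\}$. A clock region is an equivalence class of $V$ under ''satisfies the same simple clock constraints''; a clock zone is a convex union of clock regions. For a finite set $L$ of locations, a configuration is $s=(\ell,\nu)\in Q=L\times V$; write $s(c)=\nu(c)$ and $s+t=(\ell,\nu+t)$ (defined if $\nu+t\in V$). A region is $(\ell,P)$ (identified with $\{(\ell,\nu):\nu\in P\}$) for a clock region $P$; $[s]$ is the region containing $s$, $\mathcal R$ the set of regions, $\overline R$ the topological closure of $R$. A zone is a set $\{(\ell,\nu):\nu\in W_\ell\}$ with each $W_\ell$ a clock zone. A timed automaton $\mathcal T=(L,C,S,A,E,\delta,\rho,F)$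 consists of finite $L$, finite $C$, a zone $S\subseteq Q$ of states, a finite set $A$ of actions, $E:A\to 2^S$ with every $E(a)$ a zone, $\delta:L\times A\to L$, $\rho:A\to 2^C$, and a zone $F\subseteq S$ of final states. For $s=(\ell,\nu)$: $s\to_t s'$ if $s'=s+t$ is defined and $s+t'\in S$ for all $t'\in[0,t]$; $s\xrightarrow{a}s'$ if $s'=(\delta(\ell,a),\mathrm{Reset}(\nu,\rho(a)))$, $s,s'\in S$ and $s\in E(a)$. For $(a,t)\in A\times\mathbb R_{\ge0}$, $\mathrm{Succ}(s,(a,t))=(\delta(\ell,a),\mathrm{Reset}(\nu+t,\rho(a)))$. A reachability-time game is $\Gamma=(\mathcal T,L_{\mathrm{Min}},L_{\mathrm{Max}})$ with $(L_{\mathrm{Min}},L_{\mathrm{Max}})$ a partition of $L$; $S_{\mathrm{Min}}$, $S_{\mathrm{Max}}$, $\mathcal R_{\mathrm{Min}}$, $\mathcal R_{\mathrm{Max}}$ are the states/regions with location in $L_{\mathrm{Min}}$ resp. $L_{\mathrm{Max}}$. Region relations: $R\to_*R'$ if there are $s\in R,s'\in R'$, $t\ge 0$ with $s\to_t s'$; $R\to_{+1}R'$ ($R'$ is the time successor of $R$) if $R\to_*R'$, $R\ne R'$, and $R\to_*R''\to_*R'$ implies $R''\in\{R,R'\}$; $R\xrightarrow aR'$ if there are $s\in R,s'\in R'$ with $s\xrightarrow a s'$. $R$ is thin if for all $s\in R$ and $\varepsilon>0$, $[s+\varepsilon]\neq[s]$. For thin $R''$, $b\in\{0,\dots,k\}$,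 $c\in C$: $R\to_{b,c}R''$ if $R\to_*R''$ and $s+(b-s(c))\in R''$ for all $s\in R$. Simple timed actions: $\mathcal A=A\times\{0,\dots,k\}\times C$; for $\alpha=(a,b,c)$, $t(s,\alpha)=b-s(c)$ if $s(c)\le b$ and $0$ otherwise, and $\mathrm{Succ}(s,\alpha)=\mathrm{Succ}(s,(a,t(s,\alpha)))$. For $F$ defined on $\overline{R'}$: $F^\oplus_\alpha(s)=t(s,\alpha)+F(\mathrm{Succ}(s,\alpha))$ and $F^\boxplus_\alpha(s)=1+F(\mathrm{Succ}(s,\alpha))$. Timed region graph $\widehat\Gamma=(\mathcal R,\mathcal M)$: $(R,\alpha,R')\in\mathcal M$ with $\alpha=(a,b,c)$ iff (i) $R\to_{b,c}R''\xrightarrow aR'$ for some $R''$; or (ii) $R\in\mathcal R_{\mathrm{Min}}$ and $R\to_{b,c}R''\to_{+1}R'''\xrightarrow aR'$ for some $R'',R'''$; or (iii) $R\in\mathcal R_{\mathrm{Max}}$ and $R\to_{b,c}R''$, $R'''\to_{+1}R''$, $R'''\xrightarrow aR'$ for some $R'',R'''$. (For $(R,\alpha,R')\in\mathcal M$ and $s\in R$, $\mathrm{Succ}(s,\alpha)\in\overline{R'}$.) Regional functions: maps $T$ assigning to each region $R$ a function $T(R):\overline R\to\mathbb R\cup\{\infty\}$ (resp. $D(R):\overline R\to\mathbb N\cup\{\infty\}$); $\widetilde T(s)=T([s])(s)$. $T$ is regionally simple (regionally constant) if each $T(R)$ is simple (constant), where $F:X\to\mathbb R$ is simple if $F\equiv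 e$ for some $e\in\mathbb Z$ or $F(s)=e-s(c)$ for some $e\in\mathbb Z$, $c\in C$. Lexicographic order: $(x,y)\le^{\mathrm{lex}}(x',y')$ iff $x<x'$, or $x=x'$ and $y\le y'$. Strategies and subgraphs: for a graph $G=(\mathcal R,\mathcal M')$, $\mathcal M'\subseteq\mathcal M$, a positional strategy for Max is a map $\chi:S_{\mathrm{Max}}\to\mathcal M'$ with $\chi(s)$ of the form $([s],\alpha,R)$; similarly $\mu:S_{\mathrm{Min}}\to\mathcal M'$ for Min; $\Delta_{\mathrm{Max}},\Delta_{\mathrm{Min}}$ are these sets. A strategy is regionally constant if $[s]=[s']$ implies equal values (write $\chi(R)$). For regionally constant $\chi$, the strategy subgraph $G\upharpoonright\chi$ keeps all moves of $G$ out of $\mathcal R_{\mathrm{Min}}$ and, out of each $R\in\mathcal R_{\mathrm{Max}}$, only $\chi(R)$; $G\upharpoonright\mu$ is analogous. A region is choiceless in $G$ if it has a unique outgoing move; $G$ is 0-player if all regions are choiceless, 1-player if all Min regions or all Max regions are choiceless. For $s\in S$ let $M^*(s,(T,D))$ (resp. $M_*(s,(T,D))$) be the set of moves $m=([s],\alpha,R')$ of $G$ at which $(T(R')^\oplus_\alpha(s),D(R')^\boxplus_\alpha(s))$ is lexicographically maximal (resp. minimal). Fix a function $\mathrm{Choose}$ selecting an element of each nonempty set of moves. $\mathrm{Improve}_{\mathrm{Max}}(\chi,(T,D))(s)=\chi(s)$ if $\chi(s)\in M^*(s,(T,D))$, and $=\mathrm{Choose}(M^*(s,(T,D)))$ otherwise.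 Optimality equations for a graph $G$: $(T,D)\models\mathrm{Opt}_{\mathrm{Max}}(G)$ (resp. $\mathrm{Opt}_{\mathrm{Min}}(G)$) iff $(\widetilde T(s),\widetilde D(s))=(0,0)$ for $s\in F$ and, for all $s\in S\setminus F$, $(\widetilde T(s),\widetilde D(s))=\max^{\mathrm{lex}}$ (resp. $\min^{\mathrm{lex}}$) of $\{(T(R')^\oplus_\alpha(s),D(R')^\boxplus_\alpha(s)):([s],\alpha,R')\text{ a move of }G\}$. If $G$ is 0-player these coincide and are written $\mathrm{Opt}(G)$. *)

From Stdlib Require Import Reals ClassicalEpsilon List.
Open Scope R_scope.
Set Implicit Arguments.
Unset Strict Implicit.

Definition finite_type (X : Type) : Prop := exists l : list X, forall x, In x l.

Definition valid (k : nat) {C : Type} (nu : C -> R) : Prop :=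
  forall c, 0 <= nu c <= INR k.

Inductive cmp := CLt | CGt | CEq | CLe | CGe.

Definition rel (o : cmp) (x y : R) : Prop :=
  match o with
  | CLt => x < y | CGt => x > y | CEq => x = y | CLe => x <= y | CGe => x >= y
  end.

Inductive constr (C : Type) :=
  | Single (c : C) (o : cmp) (i : nat)
  | Diff (c c' : C) (o : cmp) (i : nat).

Definition simple (k : nat) {C : Type} (phi : constr C) : Prop :=
  match phi with Single _ _ i => (i <= k)%nat | Diff _ _ _ i => (i <= k)%nat end.

Definition sat {C : Type} (nu : C -> R) (phi : constr C) : Prop :=
  match phi with
  | Single c o i => rel o (nu c) (INR i)
  | Diff c c' o i => rel o (nu c - nu c') (INR i)
  end.

Definition clock_equiv (k : nat) {C : Type} (nu nu' : C -> R) : Prop :=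
  valid k nu /\ valid k nu' /\
  forall phi : constr C, simple k phi -> (sat nu phi <-> sat nu' phi).

Definition clock_zone (k : nat) {C : Type} (W : (C -> R) -> Prop) : Prop :=
  (forall nu, W nu -> valid k nu) /\
  (forall nu nu', W nu -> clock_equiv k nu nu' -> W nu') /\
  (forall nu nu' lam, W nu -> W nu' -> 0 <= lam <= 1 ->
      W (fun c => lam * nu c + (1 - lam) * nu' c)).

Definition config (L C : Type) : Type := (L * (C -> R))%type.

Definition inQ (k : nat) {L C : Type} (s : config L C) : Prop := valid k (snd s).

Definition delay {L C : Type} (s : config L C) (t : R) : config L C :=
  (fst s, fun c => snd s c + t).

Definition reset {C : Type} (nu : C -> R) (X : C -> bool) : C -> R :=
  fun c => if X c then 0 else nu c.

Definition reg (k : nat) {L C : Type} (s : config L C) : config L C -> Prop :=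
  fun s' => fst s' = fst s /\ clock_equiv k (snd s) (snd s').

Definition is_region (k : nat) {L C : Type} (Rg : config L C -> Prop) : Prop :=
  exists s, inQ k s /\ Rg = reg k s.

Definition zone (k : nat) {L C : Type} (Z : config L C -> Prop) : Prop :=
  forall l : L, clock_zone k (fun nu => Z (l, nu)).

Record TA (k : nat) (L C A : Type) := mkTA {
  ta_L_fin : finite_type L;
  ta_C_fin : finite_type C;
  ta_A_fin : finite_type A;
  ta_S : config L C -> Prop;
  ta_E : A -> config L C -> Prop;
  ta_delta : L -> A -> L;
  ta_rho : A -> C -> bool;          (* characteristic function of rho(a) ⊆ C *)
  ta_F : config L C -> Prop;
  ta_S_zone : zone k ta_S;
  ta_E_zone : forall a, zone k (ta_E a);
  ta_E_sub : forall a s, ta_E a s -> ta_S s;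
  ta_F_zone : zone k ta_F;
  ta_F_sub : forall s, ta_F s -> ta_S s
}.

(* (L_Min, L_Max) given by the characteristic function of L_Max *)
Record game (k : nat) (L C A : Type) := mkGame {
  g_ta : TA k L C A;
  g_isMax : L -> bool
}.

Section Game.
Context {k : nat} {L C A : Type} (g : game k L C A).

Let T := g_ta g.
Let SS := ta_S T.
Let Cfg := config L C.

Definition delay_step (s : Cfg) (t : R) (s' : Cfg) : Prop :=
  0 <= t /\ s' = delay s t /\ valid k (snd s') /\
  forall t', 0 <= t' <= t -> SS (delay s t').

Definition act_step (a : A) (s s' : Cfg) : Prop :=
  s' = (ta_delta T (fst s) a, reset (snd s) (ta_rho T a)) /\
  SS s /\ SS s' /\ ta_E T a s.

Definition succ (s : Cfg) (a : A) (t : R) : Cfg :=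
  (ta_delta T (fst s) a, reset (snd (delay s t)) (ta_rho T a)).

Definition reach_star (R1 R2 : Cfg -> Prop) : Prop :=
  exists s s' t, R1 s /\ R2 s' /\ delay_step s t s'.

Definition time_succ (R1 R2 : Cfg -> Prop) : Prop :=
  reach_star R1 R2 /\ R1 <> R2 /\
  forall R3, is_region k R3 -> reach_star R1 R3 -> reach_star R3 R2 ->
    R3 = R1 \/ R3 = R2.

Definition region_act (a : A) (R1 R2 : Cfg -> Prop) : Prop :=
  exists s s', R1 s /\ R2 s' /\ act_step a s s'.

Definition thin (Rg : Cfg -> Prop) : Prop :=
  forall s, Rg s -> forall eps, eps > 0 -> reg k (delay s eps) <> reg k s.

Definition reach_bc (b : nat) (c : C) (R1 R2 : Cfg -> Prop) : Prop :=
  thin R2 /\ reach_star R1 R2 /\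
  forall s, R1 s -> R2 (delay s (INR b - snd s c)).

Definition region_min (Rg : Cfg -> Prop) : Prop :=
  exists s, inQ k s /\ Rg = reg k s /\ g_isMax g (fst s) = false.
Definition region_max (Rg : Cfg -> Prop) : Prop :=
  exists s, inQ k s /\ Rg = reg k s /\ g_isMax g (fst s) = true.

Definition sta : Type := (A * nat * C)%type.

Definition tdel (al : sta) (s : Cfg) : R :=
  let '(_, b, c) := al in
  if Rle_dec (snd s c) (INR b) then INR b - snd s c else 0.

Definition succ_sta (s : Cfg) (al : sta) : Cfg :=
  let '(a, _, _) := al in succ s a (tdel al s).

Record move := mkMove { msrc : Cfg -> Prop; mact : sta; mdst : Cfg -> Prop }.

Definition inM (m : move) : Prop :=
  let '(a, b, c) := mact m in
  is_region k (msrc m) /\ is_region k (mdst m) /\ (b <= k)%nat /\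
  ( (exists R2, is_region k R2 /\ reach_bc b c (msrc m) R2 /\
                region_act a R2 (mdst m))
  \/ (region_min (msrc m) /\
      exists R2 R3, is_region k R2 /\ is_region k R3 /\
        reach_bc b c (msrc m) R2 /\ time_succ R2 R3 /\ region_act a R3 (mdst m))
  \/ (region_max (msrc m) /\
      exists R2 R3, is_region k R2 /\ is_region k R3 /\
        reach_bc b c (msrc m) R2 /\ time_succ R3 R2 /\ region_act a R3 (mdst m))).

(* a graph G = (R, M') with M' ⊆ M, given by its move set *)
Definition subgraph (G : move -> Prop) : Prop := forall m, G m -> inM m.

Definition choiceless (G : move -> Prop) (Rg : Cfg -> Prop) : Prop :=
  forall m1 m2, G m1 -> G m2 -> msrc m1 = Rg -> msrc m2 = Rg -> m1 = m2.

(** extended values: R ∪ {∞} and N ∪ {∞} (None = ∞) *)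
Inductive xreal := XR (r : R) | XInf.

Definition xlt (x y : xreal) : Prop :=
  match x, y with
  | XR a, XR b => a < b
  | XR _, XInf => True
  | XInf, _ => False
  end.

Definition nle (x y : option nat) : Prop :=
  match x, y with
  | Some a, Some b => (a <= b)%nat
  | _, None => True
  | None, Some _ => False
  end.

Definition lexle (p q : xreal * option nat) : Prop :=
  xlt (fst p) (fst q) \/ (fst p = fst q /\ nle (snd p) (snd q)).

Definition xadd (t : R) (x : xreal) : xreal :=
  match x with XR r => XR (t + r) | XInf => XInf end.

Definition nsucc (x : option nat) : option nat := option_map S x.

(* regional functions: T(R) and D(R), only meaningful on the closure of R *)
Definition rfunT : Type := (Cfg -> Prop) -> Cfg -> xreal.
Definition rfunD : Type := (Cfg -> Prop) -> Cfg -> option nat.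

Definition tilT (Tf : rfunT) (s : Cfg) : xreal := Tf (reg k s) s.
Definition tilD (Df : rfunD) (s : Cfg) : option nat := Df (reg k s) s.

Definition mval (Tf : rfunT) (Df : rfunD) (m : move) (s : Cfg) : xreal * option nat :=
  (xadd (tdel (mact m) s) (Tf (mdst m) (succ_sta s (mact m))),
   nsucc (Df (mdst m) (succ_sta s (mact m)))).

Definition is_lexmax (X : xreal * option nat -> Prop) (v : xreal * option nat) : Prop :=
  X v /\ forall w, X w -> lexle w v.
Definition is_lexmin (X : xreal * option nat -> Prop) (v : xreal * option nat) : Prop :=
  X v /\ forall w, X w -> lexle v w.

Definition move_vals (G : move -> Prop) Tf Df (s : Cfg) : xreal * option nat -> Prop :=
  fun v => exists m, G m /\ msrc m = reg k s /\ v = mval Tf Df m s.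

Definition OptMax (G : move -> Prop) (Tf : rfunT) (Df : rfunD) : Prop :=
  (forall s, ta_F T s -> tilT Tf s = XR 0 /\ tilD Df s = Some 0%nat) /\
  (forall s, SS s -> ~ ta_F T s ->
     is_lexmax (move_vals G Tf Df s) (tilT Tf s, tilD Df s)).

Definition OptMin (G : move -> Prop) (Tf : rfunT) (Df : rfunD) : Prop :=
  (forall s, ta_F T s -> tilT Tf s = XR 0 /\ tilD Df s = Some 0%nat) /\
  (forall s, SS s -> ~ ta_F T s ->
     is_lexmin (move_vals G Tf Df s) (tilT Tf s, tilD Df s)).

(* for a 0-player graph Opt_Max and Opt_Min coincide; Opt(G) := Opt_Max(G) *)
Definition Opt0 := OptMax.

Definition S_Max (s : Cfg) : Prop := SS s /\ g_isMax g (fst s) = true.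

Definition max_strategy (G : move -> Prop) (chi : Cfg -> move) : Prop :=
  forall s, S_Max s -> G (chi s) /\ msrc (chi s) = reg k s.

Definition regionally_constant_max (chi : Cfg -> move) : Prop :=
  forall s s', S_Max s -> S_Max s' -> reg k s = reg k s' -> chi s = chi s'.

Definition restrict_max (G : move -> Prop) (chi : Cfg -> move) : move -> Prop :=
  fun m => G m /\ (region_min (msrc m) \/ exists s, S_Max s /\ m = chi s).

Definition Mstar (G : move -> Prop) Tf Df (s : Cfg) : move -> Prop :=
  fun m => G m /\ msrc m = reg k s /\
    forall m', G m' -> msrc m' = reg k s -> lexle (mval Tf Df m' s) (mval Tf Df m s).

Definition choose_spec (choose : (move -> Prop) -> move) : Prop :=
  forall X : move -> Prop, (exists m, X m) -> X (choose X).

Definition ImproveMax (choose : (move -> Prop) -> move) (G : move -> Prop)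
    (chi : Cfg -> move) Tf Df : Cfg -> move :=
  fun s => if excluded_middle_informative (Mstar G Tf Df s (chi s))
           then chi s else choose (Mstar G Tf Df s).

End Game.

(* The optimality equations of Opt_Max(G) are checked configuration
   by configuration:
   - at a Min configuration, G|chi keeps every move of G out of the region,
     so the equations of G|chi and of Opt_Max(G) range over the same moves;
   - at a Max configuration s, the only move of G|chi out of [s] is chi(s),
     so (T(s),D(s)) is the value of chi(s); since Improve_Max leaves chi
     unchanged, chi(s) lies in M^*(s,(T,D)), i.e. its value is the
     lexicographic maximum over all moves of G out of [s].
   The second point needs M^*(s,(T,D)) to be nonempty (otherwise Choose is
   unconstrained); this follows from finiteness: there are finitely many
   regions and simple timed actions, hence finitely many move values, and a
   finite nonempty set of values has a lexicographic maximum. *)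

From Stdlib Require Import Reals List Classical ClassicalEpsilon
  FunctionalExtensionality PropExtensionality Lia Lra.
Import ListNotations.
Open Scope R_scope.

Lemma nle_total (x y : option nat) : nle x y \/ nle y x.
Proof.
  destruct x as [a|], y as [b|]; simpl; auto.
  destruct (Nat.le_ge_cases a b); auto.
Qed.

Lemma nle_trans (x y z : option nat) : nle x y -> nle y z -> nle x z.
Proof. destruct x, y, z; simpl; intuition lia. Qed.

Lemma xlt_trans (x y z : xreal) : xlt x y -> xlt y z -> xlt x z.
Proof. destruct x, y, z; simpl; intuition lra. Qed.

Lemma lexle_total (p q : xreal * option nat) : lexle p q \/ lexle q p.
Proof.
  destruct p as [x n], q as [y m]; unfold lexle; simpl.
  assert (Htri : xlt x y \/ x = y \/ xlt y x).
  { destruct x as [a|], y as [b|]; simpl; auto.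
    destruct (total_order_T a b) as [[H|H]|H]; subst; auto. }
  destruct Htri as [H|[<-|H]]; auto.
  destruct (nle_total n m); auto.
Qed.

Lemma lexle_trans (p q r : xreal * option nat) :
  lexle p q -> lexle q r -> lexle p r.
Proof.
  destruct p as [x n], q as [y m], r as [z o]; unfold lexle; simpl.
  intros [H1|[<- H1]] [H2|[<- H2]].
  - left; eapply xlt_trans; eauto.
  - left; exact H1.
  - left; exact H2.
  - right; split; [reflexivity | eapply nle_trans; eauto].
Qed.

Lemma max_of_finite {X : Type} (le : X -> X -> Prop)
  (le_total : forall x y, le x y \/ le y x)
  (le_trans : forall x y z, le x y -> le y z -> le x z)
  (V : X -> Prop) (l : list X) :
  (forall v, V v -> In v l) -> (exists v, V v) ->
  exists v, V v /\ forall w, V w -> le w v.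
Proof.
  intros Hcover [v0 Hv0].
  assert (le_refl : forall x, le x x) by (intro x; destruct (le_total x x); auto).
  assert (Hmax : forall l, (exists v, V v /\ In v l) ->
    exists v, V v /\ forall w, V w -> In w l -> le w v).
  { clear Hcover l v0 Hv0. intro l. induction l as [|a rest IH].
    - intros [v [_ []]].
    - intros Hne.
      destruct (classic (exists v, V v /\ In v rest)) as [Htail|Hnotail].
      + destruct (IH Htail) as [m [Hm Hmax]].
        destruct (classic (V a)) as [Ha|Ha].
        * destruct (le_total a m) as [Ham|Hma].
          -- exists m; split; auto. intros w Hw [<-|Hin]; auto.
          -- exists a; split; auto.
             intros w Hw [<-|Hin]; [apply le_refl | eapply le_trans; eauto].
        * exists m; split; auto. intros w Hw [<-|Hin]; [contradiction | auto].
      + destruct Hne as [v [Hv [<-|Hin]]]; [|exfalso; eauto].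
        exists a; split; auto.
        intros w Hw [<-|Hin]; [apply le_refl | exfalso; eauto]. }
  destruct (Hmax l) as [m [Hm Hle]]; eauto.
Qed.

Lemma finite_image {X K Y : Type} (P : X -> Prop) (key : X -> K) (f : X -> Y)
  (keys : list K) :
  (forall x, P x -> In (key x) keys) ->
  (forall x y, P x -> P y -> key x = key y -> f x = f y) ->
  exists ly, forall x, P x -> In (f x) ly.
Proof.
  intros Hkeys Hfibre.
  assert (Hgen : forall keys, exists ly,
    forall x, P x -> In (key x) keys -> In (f x) ly).
  { clear Hkeys. intro keys'. induction keys' as [|a rest [ly Hly]].
    - exists nil; intros x _ [].
    - destruct (classic (exists x0, P x0 /\ key x0 = a)) as [[x0 [Hx0 Hkey]]|Hnone].
      + exists (f x0 :: ly). intros x Hx [Ha|Hin]; [left | right; auto].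
        apply Hfibre; congruence.
      + exists ly. intros x Hx [Ha|Hin]; auto. exfalso; eauto. }
  destruct (Hgen keys) as [ly Hly]. exists ly; auto.
Qed.

Fixpoint bool_vectors (n : nat) : list (list bool) :=
  match n with
  | O => [[]]
  | S n => map (cons true) (bool_vectors n) ++ map (cons false) (bool_vectors n)
  end.

Lemma bool_vectors_complete (v : list bool) : In v (bool_vectors (length v)).
Proof.
  induction v as [|b v IH]; simpl; auto.
  apply in_or_app. destruct b; [left | right]; apply in_map; exact IH.
Qed.

Definition simple_constraints {C : Type} (k : nat) (clocks : list C) : list (constr C) :=
  let bounds := seq 0 (S k) in
  let ops := [CLt; CGt; CEq; CLe; CGe] in
  flat_map (fun c => flat_map (fun o => map (Single c o) bounds) ops) clocks ++
  flat_map (fun c => flat_map (fun c' =>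
    flat_map (fun o => map (Diff c c' o) bounds) ops) clocks) clocks.

Lemma simple_constraints_complete {C : Type} (k : nat) (clocks : list C) phi :
  (forall c, In c clocks) -> simple k phi -> In phi (simple_constraints k clocks).
Proof.
  intros Hclocks Hsimple. unfold simple_constraints. apply in_or_app.
  assert (Hops : forall o, In o [CLt; CGt; CEq; CLe; CGe]) by (destruct o; simpl; tauto).
  destruct phi as [c o i|c c' o i]; simpl in Hsimple; [left | right];
    repeat (apply in_flat_map; eexists; split; [apply Hclocks || apply Hops |]);
    apply in_map_iff; exists i; split; auto; apply in_seq; lia.
Qed.

Definition sat_bool {C : Type} (nu : C -> R) (phi : constr C) : bool :=
  if excluded_middle_informative (sat nu phi) then true else false.

Lemma reg_ext (k : nat) {L C : Type} (s1 s2 : config L C) :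
  inQ k s1 -> inQ k s2 -> fst s1 = fst s2 ->
  (forall phi, simple k phi -> (sat (snd s1) phi <-> sat (snd s2) phi)) ->
  reg k s1 = reg k s2.
Proof.
  intros Hq1 Hq2 Hloc Hsat.
  extensionality s. apply propositional_extensionality.
  unfold reg, clock_equiv. rewrite Hloc.
  split; intros [Hl [_ [Hv Hs]]];
    (split; [exact Hl | split; [assumption | split; [exact Hv |]]]);
    intros phi Hphi; specialize (Hs phi Hphi); specialize (Hsat phi Hphi); tauto.
Qed.

(* There are finitely many regions: a region is determined by its location
   and by which of the finitely many simple clock constraints it satisfies. *)
Lemma regions_finite (k : nat) (L C : Type) :
  finite_type L -> finite_type C ->
  exists lr, forall s : config L C, inQ k s -> In (reg k s) lr.
Proof.
  intros [locs Hlocs] [clocks Hclocks].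
  set (cs := simple_constraints k clocks).
  apply (finite_image (inQ k) (fun s : config L C => (fst s, map (sat_bool (snd s)) cs))
           (reg k) (list_prod locs (bool_vectors (length cs)))).
  - intros s _. apply in_prod; auto.
    rewrite <- (length_map (sat_bool (snd s)) cs). apply bool_vectors_complete.
  - intros s1 s2 Hq1 Hq2 Hkey. injection Hkey as Hloc Hsig.
    apply reg_ext; auto. intros phi Hphi.
    assert (Hin : In phi cs) by (apply simple_constraints_complete; auto).
    assert (Hb : sat_bool (snd s1) phi = sat_bool (snd s2) phi).
    { clear - Hsig Hin. induction cs as [|psi rest IH]; simpl in *; [contradiction|].
      injection Hsig as Hhd Htl. destruct Hin as [<-|Hin]; auto. }
    unfold sat_bool in Hb.
    destruct (excluded_middle_informative (sat (snd s1) phi)),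
             (excluded_middle_informative (sat (snd s2) phi)); try discriminate; tauto.
Qed.

Lemma reg_self (k : nat) {L C : Type} (s : config L C) : inQ k s -> reg k s s.
Proof. intro Hq. split; [reflexivity | split; [exact Hq | split; [exact Hq | tauto]]]. Qed.

Section GameFacts.

Context {k : nat} {L C A : Type} (g : game k L C A).

Lemma state_inQ (s : config L C) : ta_S (g_ta g) s -> inQ k s.
Proof.
  destruct s as [l nu]. intro Hs. exact (proj1 (ta_S_zone (g_ta g) l) nu Hs).
Qed.

Lemma inM_shape (m : @move L C A) :
  inM g m ->
  (exists s', inQ k s' /\ mdst m = reg k s') /\
  exists a b c, mact m = (a, b, c) /\ (b <= k)%nat.
Proof.
  unfold inM. destruct (mact m) as [[a b] c]. intros [_ [Hdst [Hb _]]].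
  split; [exact Hdst | exists a, b, c; auto].
Qed.

(* Out of a given configuration, the moves of a subgraph of the timed region
   graph take only finitely many values: their labels range over the finite
   set A x {0..k} x C and their targets over the finitely many regions. *)
Lemma move_vals_finite (G : @move L C A -> Prop) (Tf : @rfunT L C) (Df : @rfunD L C)
  (s : config L C) :
  subgraph g G -> exists lv, forall v, move_vals g G Tf Df s v -> In v lv.
Proof.
  intro Hsub.
  destruct (regions_finite k L C (ta_L_fin (g_ta g)) (ta_C_fin (g_ta g))) as [lr Hlr].
  destruct (ta_A_fin (g_ta g)) as [la Hla], (ta_C_fin (g_ta g)) as [lc Hlc].
  exists (flat_map (fun al => map (fun R' => mval g Tf Df (mkMove (reg k s) al R') s) lr)
            (list_prod (list_prod la (seq 0 (S k))) lc)).
  intros v [m [HGm [Hsrc ->]]].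
  destruct (inM_shape m (Hsub m HGm)) as [[s' [Hq' Hdst]] [a [b [c [Hact Hb]]]]].
  apply in_flat_map. exists (mact m). split.
  - rewrite Hact. repeat apply in_prod; auto. apply in_seq; lia.
  - apply in_map_iff. exists (mdst m). split.
    + destruct m; simpl in *; subst; reflexivity.
    + rewrite Hdst. auto.
Qed.

Lemma Mstar_nonempty (G : @move L C A -> Prop) (Tf : @rfunT L C) (Df : @rfunD L C)
  (s : config L C) (m : @move L C A) :
  subgraph g G -> G m -> msrc m = reg k s -> exists m0, Mstar g G Tf Df s m0.
Proof.
  intros Hsub HGm Hsrc.
  destruct (move_vals_finite G Tf Df s Hsub) as [lv Hlv].
  destruct (max_of_finite lexle lexle_total lexle_trans (move_vals g G Tf Df s) lv Hlv)
    as [v [[m0 [HG0 [Hsrc0 ->]]] Hmax]].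
  { exists (mval g Tf Df m s), m; auto. }
  exists m0. repeat split; auto.
  intros m' HG' Hsrc'. apply Hmax. exists m'; auto.
Qed.

Variables (G : @move L C A -> Prop) (chi : config L C -> @move L C A).
Hypotheses (Hsub : subgraph g G) (Hchi : max_strategy g G chi)
  (Hconst : regionally_constant_max g chi).

(* If Improve_Max does not change chi at s, then chi(s) is in M^*(s,(T,D)):
   otherwise Improve_Max picks an element of the nonempty set M^*. *)
Lemma improve_fixpoint_Mstar (choose : (@move L C A -> Prop) -> @move L C A)
  (Tf : @rfunT L C) (Df : @rfunD L C) (s : config L C) :
  choose_spec choose -> S_Max g s ->
  ImproveMax g choose G chi Tf Df s = chi s -> Mstar g G Tf Df s (chi s).
Proof.
  intros Hchoose Hmax Hfix. unfold ImproveMax in Hfix.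
  destruct (excluded_middle_informative (Mstar g G Tf Df s (chi s))) as [H|H]; auto.
  destruct (Hchi s Hmax) as [HG Hsrc].
  rewrite <- Hfix. apply Hchoose. eapply Mstar_nonempty; eauto.
Qed.

Lemma restrict_move_at_max (s : config L C) (m : @move L C A) :
  S_Max g s -> restrict_max g G chi m -> msrc m = reg k s -> m = chi s.
Proof.
  intros Hmax [_ [[s0 [Hq0 [Hsrc0 Hmin0]]] | [s' [Hmax' ->]]]] Hsrc.
  - exfalso. rewrite Hsrc in Hsrc0.
    assert (Hs0 : reg k s s0) by (rewrite Hsrc0; apply reg_self; auto).
    destruct Hs0 as [Hloc _]. destruct Hmax as [_ Hismax].
    congruence.
  - apply Hconst; auto. destruct (Hchi s' Hmax') as [_ Hsrc']. congruence.
Qed.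

Lemma restrict_keeps_min_moves (s : config L C) (m : @move L C A) :
  inQ k s -> g_isMax g (fst s) = false -> G m -> msrc m = reg k s ->
  restrict_max g G chi m.
Proof.
  intros Hq Hmin HGm Hsrc. split; auto. left. rewrite Hsrc. exists s; auto.
Qed.

Section Optimality.

Variables (Tf : @rfunT L C) (Df : @rfunD L C).
Hypothesis (Hopt : Opt0 g (restrict_max g G chi) Tf Df).

Let value (s : config L C) : xreal * option nat := (tilT (k:=k) Tf s, tilD (k:=k) Df s).

(* At a Max configuration, the value given by Opt(G|chi) is that of chi(s),
   which lies in M^*: it dominates every move of G, as Opt_Max(G) requires. *)
Lemma opt_at_max (choose : (@move L C A -> Prop) -> @move L C A) (s : config L C) :
  choose_spec choose -> S_Max g s -> ~ ta_F (g_ta g) s ->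
  ImproveMax g choose G chi Tf Df s = chi s ->
  is_lexmax (move_vals g G Tf Df s) (value s).
Proof.
  intros Hchoose Hmax HnF Hfix.
  destruct (proj2 Hopt s (proj1 Hmax) HnF) as [[m [Hrm [Hsrc Hval]]] _].
  pose proof (restrict_move_at_max s m Hmax Hrm Hsrc) as ->.
  destruct (improve_fixpoint_Mstar choose Tf Df s Hchoose Hmax Hfix) as [HG [_ Hbest]].
  split.
  - exists (chi s); auto.
  - intros w [m' [HG' [Hsrc' ->]]]. unfold value. rewrite Hval. apply Hbest; auto.
Qed.

(* At a Min configuration, G and G|chi have the same moves out of [s], so the
   two optimality equations coincide. *)
Lemma opt_at_min (s : config L C) :
  ta_S (g_ta g) s -> g_isMax g (fst s) = false -> ~ ta_F (g_ta g) s ->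
  is_lexmax (move_vals g G Tf Df s) (value s).
Proof.
  intros Hs Hmin HnF.
  destruct (proj2 Hopt s Hs HnF) as [[m [Hrm [Hsrc Hval]]] Hbest].
  split.
  - exists m. split; [exact (proj1 Hrm) | auto].
  - intros w [m' [HG' [Hsrc' ->]]]. apply Hbest. exists m'.
    split; [apply (restrict_keeps_min_moves s); auto; apply state_inQ; exact Hs | auto].
Qed.

End Optimality.

End GameFacts.

Theorem mainTheorem11 (k : nat) (L C A : Type) (g : game k L C A)
  (G : @move L C A -> Prop)
  (choose : (@move L C A -> Prop) -> @move L C A)
  (chi : config L C -> @move L C A)
  (Tchi : @rfunT L C) (Dchi : @rfunD L C) :
  subgraph g G ->
  (forall Rg, region_min g Rg -> choiceless G Rg) ->
  choose_spec choose ->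
  max_strategy g G chi ->
  regionally_constant_max g chi ->
  Opt0 g (restrict_max g G chi) Tchi Dchi ->
  (forall s, S_Max g s -> ImproveMax g choose G chi Tchi Dchi s = chi s) ->
  OptMax g G Tchi Dchi.
Proof.
  intros Hsub _ Hchoose Hchi Hconst Hopt Hfix.
  split; [exact (proj1 Hopt) |].
  intros s Hs HnF.
  destruct (g_isMax g (fst s)) eqn:Hplayer.
  - assert (Hmax : S_Max g s) by (split; assumption).
    exact (opt_at_max g G chi Hsub Hchi Hconst Tchi Dchi Hopt choose s
             Hchoose Hmax HnF (Hfix s Hmax)).
  - exact (opt_at_min g G chi Tchi Dchi Hopt s Hs Hplayer HnF).
Qed.
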